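(* Let $\alpha\in(0,1)$ and $R>0$. A target moves in the plane with position $(0,y_T(t))$, $\dot y_T=1$, and an observer moves with position $(x_O(t),y_O(t))$, $\dot x_O=\alpha\cos\psi(t)$, $\dot y_O=\alpha\sin\psi(t)$, where the heading $\psi$ is a measurable control. Suppose that at time $t_2$ the target lies on the boundary of the observer's observation disk of radius $R$, with relative bearing $\lambda=\lambda_{TO,2}\in[-\pi,\pi]$, i.e. $\big(x_O(t_2),\,y_O(t_2)-y_T(t_2)\big)=R(\sin\lambda,\cos\lambda)$. Then the heading which maximizes the observation time $t_f-t_2$ (Phase-II) is the constant heading $$\psi_{O,2}^*=\cos^{-1}\!\left(\frac{(\alpha^2-1)\sin\lambda}{\alpha^2+2\alpha\cos\lambda+1}\right).$$
   Context: The target is observed when $\sqrt{x_O^2+(y_O-y_T)^2}\le R$. For a control $\psi$ on $[t_2,\infty)$, the escape time is $t_f=\inf\{t\ge t_2:\ x_O(t)^2+(y_O(t)-y_T(t))^2>R^2\}$, and the observation time is $t_f-t_2$. $\alpha=v_O/v_T$ is the speed ratio of observer to target (target speed normalized to $1$). Headings are measured counterclockwise from the positive $x$-axis. *)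

From HB Require Import structures.
From mathcomp Require Import all_boot all_order all_algebra.
From mathcomp Require Import all_classical all_reals all_analysis.
Set Implicit Arguments. Unset Strict Implicit. Unset Printing Implicit Defensive.
Import Order.TTheory GRing.Theory Num.Theory.
Import numFieldNormedType.Exports.
Local Open Scope classical_set_scope.
Local Open Scope ring_scope.

Definition obs_x {R : realType} (alpha t2 xO2 : R) (psi : R -> R) (t : R) : R :=
  xO2 + Rintegral lebesgue_measure `[t2, t] (fun s => alpha * cos (psi s)).

Definition obs_y {R : realType} (alpha t2 yO2 : R) (psi : R -> R) (t : R) : R :=
  yO2 + Rintegral lebesgue_measure `[t2, t] (fun s => alpha * sin (psi s)).

Definition tgt_y {R : realType} (t2 yT2 : R) (t : R) : R := yT2 + (t - t2).

Definition escape_time {R : realType} (alpha Rad t2 xO2 yO2 yT2 : R)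
    (psi : R -> R) : R :=
  inf [set t | t2 <= t /\
     Rad ^+ 2 < (obs_x alpha t2 xO2 psi t) ^+ 2
                + (obs_y alpha t2 yO2 psi t - tgt_y t2 yT2 t) ^+ 2].

Definition observation_time {R : realType} (alpha Rad t2 xO2 yO2 yT2 : R)
    (psi : R -> R) : R :=
  escape_time alpha Rad t2 xO2 yO2 yT2 psi - t2.

Definition psi_star {R : realType} (alpha lambda : R) : R :=
  acos (((alpha ^+ 2 - 1) * sin lambda) /
        (alpha ^+ 2 + 2 * alpha * cos lambda + 1)).

From HB Require Import structures.
From mathcomp Require Import all_boot all_order all_algebra.
From mathcomp Require Import all_classical all_reals all_analysis.
From mathcomp Require Import ring lra measurable_realfun.
Set Implicit Arguments. Unset Strict Implicit. Unset Printing Implicit Defensive.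
Import Order.TTheory GRing.Theory Num.Theory.
Import numFieldNormedType.Exports.
Local Open Scope classical_set_scope.
Local Open Scope ring_scope.

(* Relative to the target, the observer starts at [C = Rad (sin l, cos l)] and
   after a time [tau] sits at [C - tau e_y + P], where [|P| <= alpha tau] for
   every heading control.  As soon as [|C - tau e_y| > Rad + alpha tau], i.e.
   for [tau > ts := 2 Rad (alpha + cos l) / (1 - alpha^2)], the target is out
   of the disk whatever the control, so every escape time is at most
   [t2 + max 0 ts].  The constant heading [psi_star] drives the relative
   position along the chord from [C] to the point of the circle reached at
   time [ts], so it keeps the target observed until then. *)

Section PlaneGeometry.
Variable R : rcfType.

Lemma dot2_le_sqrt (a b c d : R) :
  a * c + b * d <= Num.sqrt (a ^+ 2 + b ^+ 2) * Num.sqrt (c ^+ 2 + d ^+ 2).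
Proof.
rewrite -sqrtrM ?addr_ge0 ?sqr_ge0 //.
have -> : (a ^+ 2 + b ^+ 2) * (c ^+ 2 + d ^+ 2)
    = (a * c + b * d) ^+ 2 + (a * d - b * c) ^+ 2 by ring.
by rewrite (le_trans (ler_norm _)) // -sqrtr_sqr ler_wsqrtr // lerDl sqr_ge0.
Qed.

Lemma sqr_norm2_add_gt (r d cx cy p q : R) : 0 <= r -> 0 <= d ->
  (r + d) ^+ 2 < cx ^+ 2 + cy ^+ 2 -> p ^+ 2 + q ^+ 2 <= d ^+ 2 ->
  r ^+ 2 < (cx + p) ^+ 2 + (cy + q) ^+ 2.
Proof.
move=> r0 d0 hC hv.
have := dot2_le_sqrt (- cx) (- cy) p q; rewrite !sqrrN.
set a := Num.sqrt _; set b := Num.sqrt _ => hdot.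
have a0 : 0 <= a := sqrtr_ge0 _.
have b0 : 0 <= b := sqrtr_ge0 _.
have a2 : a ^+ 2 = cx ^+ 2 + cy ^+ 2 by rewrite sqr_sqrtr // addr_ge0 ?sqr_ge0.
have b2 : b ^+ 2 = p ^+ 2 + q ^+ 2 by rewrite sqr_sqrtr // addr_ge0 ?sqr_ge0.
have ha : r + d < a by rewrite -a2 in hC; nra.
have hb : b <= d by rewrite -b2 in hv; nra.
have -> : (cx + p) ^+ 2 + (cy + q) ^+ 2 = a ^+ 2 + 2 * (cx * p + cy * q) + b ^+ 2
  by rewrite a2 b2; ring.
nra.
Qed.

Lemma sqr_norm2_chord (r cx cy wx wy T tau : R) :
  cx ^+ 2 + cy ^+ 2 = r ^+ 2 ->
  2 * (cx * wx + cy * wy) + T * (wx ^+ 2 + wy ^+ 2) = 0 ->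
  0 <= tau <= T ->
  (cx + tau * wx) ^+ 2 + (cy + tau * wy) ^+ 2 <= r ^+ 2.
Proof.
move=> hC hw /andP[tau0 tauT].
have -> : (cx + tau * wx) ^+ 2 + (cy + tau * wy) ^+ 2
    = cx ^+ 2 + cy ^+ 2 + tau * (2 * (cx * wx + cy * wy) + T * (wx ^+ 2 + wy ^+ 2))
      + tau * (tau - T) * (wx ^+ 2 + wy ^+ 2) by ring.
rewrite hC hw mulr0 addr0 gerDl mulr_le0_ge0 ?addr_ge0 ?sqr_ge0 //.
by rewrite mulr_ge0_le0 // subr_le0.
Qed.

End PlaneGeometry.

Section HeadingIntegrals.
Variable R : realType.
Local Notation mu := (@lebesgue_measure R).

Lemma lebesgue_measure_itv_cc (a b : R) : a <= b -> mu `[a, b] = (b - a)%:E.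
Proof.
rewrite le_eqVlt => /orP[/eqP <-|ab]; last by rewrite lebesgue_measure_itv /= lte_fin ab.
by rewrite lebesgue_measure_itv /= ltxx subrr.
Qed.

Lemma Rintegral_itv_cst (a b k : R) : a <= b ->
  \int[mu]_(_ in `[a, b]) k = k * (b - a).
Proof.
move=> ab; rewrite Rintegral_cst //; congr (_ * _).
by rewrite -[RHS]/(fine (b - a)%:E); congr fine; exact: lebesgue_measure_itv_cc.
Qed.

Lemma integrable_itv_bounded (a b : R) (M : R) (f : R -> R) : a <= b ->
  measurable_fun `[a, b] f -> (forall x, `|f x| <= M) ->
  mu.-integrable `[a, b] (EFin \o f).
Proof.
move=> ab mf fM; apply: measurable_bounded_integrable => //.
  by rewrite [X in (X < _)%E](lebesgue_measure_itv_cc ab) ltry.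
exists M; split; first exact: num_real.
by move=> N MN x _ /=; exact: le_trans (fM x) (ltW MN).
Qed.

Variables (a b alpha : R) (psi : R -> R).
Hypotheses (ab : a <= b) (mpsi : measurable_fun `[a, b] psi).

Lemma integrable_heading (k : R) (g : R -> R) :
  continuous g -> (forall x, `|g x| <= 1) ->
  mu.-integrable `[a, b] (EFin \o (fun s => k * g (psi s))).
Proof.
move=> cg g1; apply: (@integrable_itv_bounded _ _ `|k|) => //.
  apply: measurable_funM; first exact: measurable_cst.
  by apply: measurableT_comp => //; exact: continuous_measurable_fun.
by move=> x; rewrite normrM ler_piMr.
Qed.

Lemma heading_displacement_le : 0 <= alpha ->
  (\int[mu]_(s in `[a, b]) (alpha * cos (psi s))) ^+ 2
  + (\int[mu]_(s in `[a, b]) (alpha * sin (psi s))) ^+ 2 <= (alpha * (b - a)) ^+ 2.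
Proof.
move=> alpha0; set A := Rintegral _ _ _; set B := Rintegral _ _ _.
set S := Num.sqrt (A ^+ 2 + B ^+ 2).
have S0 : 0 <= S := sqrtr_ge0 _.
have S2 : S ^+ 2 = A ^+ 2 + B ^+ 2 by rewrite sqr_sqrtr // addr_ge0 ?sqr_ge0.
have icos := integrable_heading alpha (@continuous_cos R) (@cos_max R).
have isin := integrable_heading alpha (@continuous_sin R) (@sin_max R).
have iscaled k g : continuous g -> (forall x, `|g x| <= 1) ->
    mu.-integrable `[a, b] (EFin \o (fun s => k * (alpha * g (psi s)))).
  move=> cg g1; apply: eq_integrable (integrable_heading (k * alpha) cg g1) => //.
  by move=> s _ /=; rewrite mulrA.
have icosA := iscaled A _ (@continuous_cos R) (@cos_max R).
have isinB := iscaled B _ (@continuous_sin R) (@sin_max R).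
have AB : A ^+ 2 + B ^+ 2
    = \int[mu]_(s in `[a, b]) (A * (alpha * cos (psi s)) + B * (alpha * sin (psi s))).
  by rewrite RintegralD // !expr2 {2}/A {2}/B -!RintegralZl.
(* Cauchy-Schwarz under the integral: the velocity has norm [alpha]. *)
have le_SL : A ^+ 2 + B ^+ 2 <= S * (alpha * (b - a)).
  rewrite AB mulrA -Rintegral_itv_cst //; apply: le_Rintegral => //.
  - exact: (integrableD _ icosA isinB).
  - by apply: (@integrable_itv_bounded _ _ `|S * alpha|).
  move=> s _; rewrite mulrCA [B * _]mulrCA -mulrDr [S * _]mulrC ler_wpM2l //.
  by rewrite (le_trans (dot2_le_sqrt A B _ _)) // cos2Dsin2 sqrtr1 mulr1.
have L0 : 0 <= alpha * (b - a) by rewrite mulr_ge0 // subr_ge0.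
have SL : S <= alpha * (b - a) by rewrite -S2 in le_SL; nra.
by rewrite -S2 ler_pXn2r // nnegrE.
Qed.

End HeadingIntegrals.

Lemma inf_le_of_ray (R : realType) (S : set R) (m : R) :
  has_lbound S -> `]m, +oo[ `<=` S -> inf S <= m.
Proof.
move=> lbS mS; rewrite leNgt; apply/negP => infSm.
have mid : (m + inf S) / 2 \in `]m, +oo[ by rewrite in_itv /= andbT; lra.
by have := ge_inf lbS (mS _ mid); lra.
Qed.

Lemma sqrD_eq1_itv (R : realFieldType) (u v : R) :
  u ^+ 2 + v ^+ 2 = 1 -> -1 <= u <= 1.
Proof. by move=> uv1; apply/andP; split; nra. Qed.

Section PsiStar.
Variables (R : realType) (alpha lambda : R).

Local Notation s := (sin lambda).
Local Notation c := (cos lambda).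
Local Notation D := (alpha ^+ 2 + 2 * alpha * c + 1).
Local Notation x := ((alpha ^+ 2 - 1) * s / D).
Local Notation y := ((2 * alpha + (1 + alpha ^+ 2) * c) / D).

Lemma psi_star_denom_gt0 : 0 < alpha -> alpha < 1 -> 0 < D.
Proof.
move=> alpha_gt0 alpha_lt1.
have := cos_max lambda; rewrite ler_norml => /andP[c_ge _].
have : 0 <= alpha * (1 + c) by apply: mulr_ge0; lra.
have : 0 < (1 - alpha) ^+ 2 by rewrite exprn_gt0 // subr_gt0.
lra.
Qed.

Lemma psi_star_heading_unit : D != 0 -> x ^+ 2 + y ^+ 2 = 1.
Proof.
move=> D_neq0.
have -> : x ^+ 2 = (alpha ^+ 2 - 1) ^+ 2 * (1 - c ^+ 2) / D ^+ 2 by rewrite -sin2cos2; field.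
by field.
Qed.

Lemma cos_psi_star : D != 0 -> cos (psi_star alpha lambda) = x.
Proof.
by move=> /psi_star_heading_unit /sqrD_eq1_itv x_itv; rewrite /psi_star acosK.
Qed.

Lemma sin_psi_star : 0 < alpha -> alpha < 1 -> 0 <= alpha + c ->
  sin (psi_star alpha lambda) = y.
Proof.
move=> alpha_gt0 alpha_lt1 ac_ge0; have D_gt0 := psi_star_denom_gt0 alpha_gt0 alpha_lt1.
have xy1 := psi_star_heading_unit (lt0r_neq0 D_gt0).
have y_ge0 : 0 <= y.
  apply: divr_ge0 (ltW D_gt0).
  have : 0 < alpha * (1 - alpha ^+ 2) by apply: mulr_gt0; nra.
  have : 0 <= (1 + alpha ^+ 2) * (alpha + c) by apply: mulr_ge0; nra.
  nra.
rewrite /psi_star sin_acos; last exact: sqrD_eq1_itv xy1.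
by rewrite (_ : 1 - _ = y ^+ 2) ?sqrtr_sqr ?ger0_norm //; lra.
Qed.

(* The relative velocity under [psi_star] is [(alpha x, alpha y - 1)]; this
   identity says that the relative trajectory re-crosses the circle of radius
   [Rad] after time [2 Rad (alpha + c) / (1 - alpha^2)]. *)
Lemma psi_star_chord (Rad : R) : D != 0 -> 1 - alpha ^+ 2 != 0 ->
  2 * (Rad * s * (alpha * x) + Rad * c * (alpha * y - 1))
  + 2 * Rad * (alpha + c) / (1 - alpha ^+ 2)
    * ((alpha * x) ^+ 2 + (alpha * y - 1) ^+ 2) = 0.
Proof.
move=> D_neq0 a_neq1.
have -> : Rad * s * (alpha * x) = Rad * alpha * (alpha ^+ 2 - 1) * (1 - c ^+ 2) / D.
  by rewrite -sin2cos2; field.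
have -> : (alpha * x) ^+ 2 = alpha ^+ 2 * (alpha ^+ 2 - 1) ^+ 2 * (1 - c ^+ 2) / D ^+ 2.
  by rewrite -sin2cos2; field.
by field; rewrite D_neq0 a_neq1.
Qed.

End PsiStar.

Definition optimal_escape_time (R : realType) (alpha Rad lambda t2 : R) :=
  t2 + Num.max 0 (2 * Rad * (alpha + cos lambda) / (1 - alpha ^+ 2)).

Section PhaseII.
Variables (R : realType) (alpha Rad lambda t2 xO2 yO2 yT2 : R).
Hypotheses (alpha_gt0 : 0 < alpha) (alpha_lt1 : alpha < 1) (Rad_gt0 : 0 < Rad).
Hypotheses (hx : xO2 = Rad * sin lambda) (hy : yO2 - yT2 = Rad * cos lambda).

Local Notation s := (sin lambda).
Local Notation c := (cos lambda).
Local Notation ts := (2 * Rad * (alpha + c) / (1 - alpha ^+ 2)).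
Local Notation escape_set psi := [set t | t2 <= t /\
  Rad ^+ 2 < (obs_x alpha t2 xO2 psi t) ^+ 2
             + (obs_y alpha t2 yO2 psi t - tgt_y t2 yT2 t) ^+ 2].

Let one_sub_alpha2_gt0 : 0 < 1 - alpha ^+ 2.
Proof. by rewrite subr_gt0 expr_lt1 // ltW. Qed.

Lemma obs_y_sub_tgt_y psi t : obs_y alpha t2 yO2 psi t - tgt_y t2 yT2 t
  = Rad * c - (t - t2) + \int[lebesgue_measure]_(u in `[t2, t]) (alpha * sin (psi u)).
Proof. by rewrite /obs_y /tgt_y -hy; ring. Qed.

Lemma drift_sqr_norm_gt (tau : R) : 0 < tau -> ts < tau ->
  (Rad + alpha * tau) ^+ 2 < (Rad * s) ^+ 2 + (Rad * c - tau) ^+ 2.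
Proof.
move=> tau_gt0; rewrite ltr_pdivrMr // => late.
have -> : (Rad * s) ^+ 2 + (Rad * c - tau) ^+ 2 = Rad ^+ 2 - 2 * Rad * c * tau + tau ^+ 2.
  by rewrite exprMn sin2cos2; ring.
have : 0 < tau * (tau * (1 - alpha ^+ 2) - 2 * Rad * (alpha + c)).
  by rewrite mulr_gt0 // subr_gt0.
nra.
Qed.

Lemma escape_set_gt psi : measurable_fun `[t2, +oo[ psi ->
  forall t, optimal_escape_time alpha Rad lambda t2 < t -> escape_set psi t.
Proof.
move=> mpsi t; rewrite /optimal_escape_time -ltrBrDl gt_max => /andP[tau_gt0 late].
have t2t : t2 <= t by rewrite -subr_ge0 ltW.
split=> //; rewrite /obs_x obs_y_sub_tgt_y hx.
apply: (@sqr_norm2_add_gt _ _ (alpha * (t - t2))).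
- exact: ltW.
- by rewrite mulr_ge0 // ltW.
- exact: drift_sqr_norm_gt.
apply: heading_displacement_le t2t _ (ltW alpha_gt0).
by apply: measurable_funS mpsi => // u /=; rewrite !in_itv /= => /andP[->].
Qed.

Lemma escape_time_le psi : measurable_fun `[t2, +oo[ psi ->
  escape_time alpha Rad t2 xO2 yO2 yT2 psi <= optimal_escape_time alpha Rad lambda t2.
Proof.
move=> mpsi; apply: inf_le_of_ray; first by exists t2 => t [].
by move=> t; rewrite /= in_itv /= andbT; exact: escape_set_gt.
Qed.

Lemma escape_set_psi_star_ge t : escape_set (fun=> psi_star alpha lambda) t ->
  optimal_escape_time alpha Rad lambda t2 <= t.
Proof.
move=> [t2t escaped]; rewrite /optimal_escape_time -lerBrDl ge_max subr_ge0 t2t /=.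
rewrite leNgt; apply/negP => early.
have ac_gt0 : 0 < alpha + c.
  have : 0 < ts by apply: le_lt_trans early; rewrite subr_ge0.
  by rewrite pmulr_lgt0 ?invr_gt0 // pmulr_rgt0 // mulr_gt0.
have D_neq0 := lt0r_neq0 (psi_star_denom_gt0 lambda alpha_gt0 alpha_lt1).
have circle : (Rad * s) ^+ 2 + (Rad * c) ^+ 2 = Rad ^+ 2.
  by rewrite !exprMn sin2cos2; ring.
have tau_itv : 0 <= t - t2 <= ts by rewrite subr_ge0 t2t ltW.
have := sqr_norm2_chord circle (psi_star_chord Rad D_neq0 (lt0r_neq0 one_sub_alpha2_gt0)) tau_itv.
move: escaped; rewrite /obs_x obs_y_sub_tgt_y !Rintegral_itv_cst // hx.
by rewrite cos_psi_star // (sin_psi_star alpha_gt0 alpha_lt1 (ltW ac_gt0)); lra.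
Qed.

Lemma escape_time_psi_star : escape_time alpha Rad t2 xO2 yO2 yT2 (fun=> psi_star alpha lambda)
  = optimal_escape_time alpha Rad lambda t2.
Proof.
apply/le_anti; rewrite escape_time_le ?measurable_cst //=.
apply: lb_le_inf; last by move=> t; exact: escape_set_psi_star_ge.
exists (optimal_escape_time alpha Rad lambda t2 + 1).
by apply: escape_set_gt; [exact: measurable_cst | rewrite ltrDl].
Qed.

End PhaseII.

Theorem lemma1 (R : realType) (alpha Rad lambda t2 xO2 yO2 yT2 : R)
  (halpha0 : 0 < alpha) (halpha1 : alpha < 1) (hRad : 0 < Rad)
  (hlam : - pi <= lambda <= pi)
  (hx : xO2 = Rad * sin lambda) (hy : yO2 - yT2 = Rad * cos lambda) :
  forall psi : R -> R, measurable_fun `[t2, +oo[ psi ->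
    observation_time alpha Rad t2 xO2 yO2 yT2 psi
      <= observation_time alpha Rad t2 xO2 yO2 yT2 (fun _ => psi_star alpha lambda).
Proof.
move=> psi mpsi; rewrite /observation_time lerD2r escape_time_psi_star //.
exact: escape_time_le.
Qed.
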